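(* With probability one, $L_\alpha=\mathbb{T}$ for every real $\alpha\in(\widetilde h,\infty)$.
   Context: Let $\mathbb{T}=\mathbb{R}/\mathbb{Z}$ with canonical surjection $\phi:\mathbb{R}\to\mathbb{T}$ and quotient distance $d$. Let $\mathcal{U}=\{\varnothing\}\cup\bigcup_{j\ge1}\{0,1\}^j$ be the set of finite words over $\{0,1\}$; for $u=u_1\dots u_j$ write $|u|=j$ ($|\varnothing|=0$), and let $u\mathcal{U}^*$ denote the words $uw$ with $w$ nonempty. Put $x_u=\phi(\sum_{j=1}^{|u|}u_j2^{-j})$. For each $j\ge0$, $\nu_{0,j},\nu_{1,j}$ are probability measures on $\{0,1\}^2$, and $X=(X_u)_{u\in\mathcal{U}}$ is a $\{0,1\}$-valued process with: for all $u\in\mathcal{U}$, $A\subseteq\{0,1\}^2$, $\mathbb{P}((X_{u0},X_{u1})\in A\mid\mathcal{G}_u)=\nu_{X_u,|u|}(A)$, $\mathcal{G}_u=\sigma(X_v:v\in\mathcal{U}\setminus u\mathcal{U}^* )$. Fix $\underline{h}>0$. Let $\eta_j=1-\nu_{0,j}(\{(0,0)\})$ and $\widetilde h=\inf\{h>0:\sum_j2^{(1-\underline{h}/h)j}\eta_j=\infty\}$ ($\inf\emptyset=\infty$). Let $S=\{u\in\mathcal{U}:X_u=1\}$ and, for $\alpha>\underline{h}$, $L_\alpha=\{x\in\mathbb{T}:d(x,x_u)<2^{-\underline{h}|u|/\alpha}\text{ for infinitely many }u\in S\}$. *)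

From Stdlib Require Import Reals List.
Open Scope R_scope.

Record is_sigma_algebra {Omega : Type} (F : (Omega -> Prop) -> Prop) : Prop := {
  sa_full  : F (fun _ => True);
  sa_compl : forall E, F E -> F (fun w => ~ E w);
  sa_union : forall E : nat -> Omega -> Prop,
      (forall n, F (E n)) -> F (fun w => exists n, E n w) }.

(** P is a probability measure on the sigma-algebra F (its values outside F are irrelevant). *)
Record is_probability {Omega : Type} (F : (Omega -> Prop) -> Prop)
       (P : (Omega -> Prop) -> R) : Prop := {
  pr_sigma  : is_sigma_algebra F;
  pr_nonneg : forall E, F E -> 0 <= P E;
  pr_full   : P (fun _ => True) = 1;
  pr_countably_additive : forall E : nat -> Omega -> Prop,
      (forall n, F (E n)) ->
      (forall m n, m <> n -> forall w, E m w -> E n w -> False) ->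
      infinite_sum (fun n => P (E n)) (P (fun w => exists n, E n w)) }.

Inductive gen_sigma {Omega I : Type} (Y : I -> Omega -> bool) (V : I -> Prop)
  : (Omega -> Prop) -> Prop :=
| gs_base  : forall v b, V v -> gen_sigma Y V (fun w => Y v w = b)
| gs_full  : gen_sigma Y V (fun _ => True)
| gs_compl : forall E, gen_sigma Y V E -> gen_sigma Y V (fun w => ~ E w)
| gs_union : forall E : nat -> Omega -> Prop,
    (forall n, gen_sigma Y V (E n)) -> gen_sigma Y V (fun w => exists n, E n w).

(** * Words over {0,1} (false = 0, true = 1) *)

Definition word := list bool.

Definition strict_ext (u v : word) : Prop := exists w, w <> nil /\ v = u ++ w.

(** real representative of x_u : sum_{j=1}^{|u|} u_j 2^{-j} *)
Fixpoint xval (u : word) : R :=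
  match u with
  | nil => 0
  | b :: u' => ((if b then 1 else 0) + xval u') / 2
  end.

(** * The torus T = R/Z, points represented by real numbers *)
(** quotient distance d(phi x, phi y) = distance from x - y to the nearest integer *)
Definition tdist (x y : R) : R :=
  Rmin (frac_part (x - y)) (1 - frac_part (x - y)).

Definition is_prob_on_pairs (nu : bool -> nat -> bool * bool -> R) : Prop :=
  forall i j, (forall p, 0 <= nu i j p) /\
    nu i j (false, false) + nu i j (false, true) + nu i j (true, false)
      + nu i j (true, true) = 1.

Definition nuA (nu : bool -> nat -> bool * bool -> R) (i : bool) (j : nat)
           (A : bool * bool -> bool) : R :=
  (if A (false, false) then nu i j (false, false) else 0)
  + (if A (false, true) then nu i j (false, true) else 0)
  + (if A (true, false) then nu i j (true, false) else 0)
  + (if A (true, true) then nu i j (true, true) else 0).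

(** P((X_{u0},X_{u1}) in A | G_u) = nu_{X_u,|u|}(A), G_u = sigma(X_v : v not in uU^* ),
    written out with the defining property of conditional probability
    (the candidate nu_{X_u,|u|}(A) being G_u-measurable and taking two values). *)
Definition branching_property {Omega : Type} (P : (Omega -> Prop) -> R)
  (nu : bool -> nat -> bool * bool -> R) (X : word -> Omega -> bool) : Prop :=
  forall (u : word) (A : bool * bool -> bool) (G : Omega -> Prop),
    gen_sigma X (fun v => ~ strict_ext u v) G ->
    P (fun w => A (X (u ++ false :: nil) w, X (u ++ true :: nil) w) = true /\ G w)
    = nuA nu false (length u) A * P (fun w => G w /\ X u w = false)
      + nuA nu true (length u) A * P (fun w => G w /\ X u w = true).

Definition eta (nu : bool -> nat -> bool * bool -> R) (j : nat) : R :=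
  1 - nu false j (false, false).

Definition diverges (f : nat -> R) : Prop :=
  forall M : R, exists n : nat, M < sum_f_R0 f n.

Definition htilde_set (nu : bool -> nat -> bool * bool -> R) (hb : R) (h : R) : Prop :=
  0 < h /\ diverges (fun j => Rpower 2 ((1 - hb / h) * INR j) * eta nu j).

Definition is_glb (S : R -> Prop) (x : R) : Prop :=
  (forall h, S h -> x <= h) /\ (forall y, (forall h, S h -> y <= h) -> y <= x).

(** t = Some x means h~ = x (infimum); t = None means h~ = +infinity (empty set). *)
Definition is_htilde (nu : bool -> nat -> bool * bool -> R) (hb : R) (t : option R) : Prop :=
  match t with
  | None => forall h, ~ htilde_set nu hb h
  | Some x => is_glb (htilde_set nu hb) x
  end.

Definition above_htilde (t : option R) (alpha : R) : Prop :=
  match t with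
  | None => False
  | Some x => x < alpha
  end.

(** x in L_alpha (for the realization w): infinitely many u in S with
    d(x, x_u) < 2^{-hb |u| / alpha}; "infinitely many" = not contained in a finite list. *)
Definition in_L {Omega : Type} (X : word -> Omega -> bool) (hb alpha : R)
           (w : Omega) (x : R) : Prop :=
  ~ exists l : list word, forall u : word,
      X u w = true ->
      tdist x (xval u) < Rpower 2 (- (hb * INR (length u) / alpha)) ->
      In u l.

(** A node is _silent_ if it and both children are inactive; a cylinder of
   generation j - k is _bad_ if all its 2^k descendants of generation j are
   silent.  By the branching property, given generations <= j, each node of
   generation j is silent with probability <= 1 - eta_j, independently, so a
   bad cylinder exists with probability <= 2^(j-k) (1-eta_j)^(2^k) <= 1/2
   when j + 1 <= eta_j 2^k; iterating over infinitely many such levels, a.s.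
   infinitely many of them have no bad cylinder.  For h < alpha with
   sum_j 2^((1-hb/h) j) eta_j = oo, a slope s/d with k_j = floor(s j / d)
   makes infinitely many levels satisfy both j + 1 <= eta_j 2^(k_j) and
   hb (j+1)/alpha <= j - k_j; then every dyadic cell of generation j - k_j
   holds an active node of generation j or j+1, close enough to every point
   of the cell.  Ranging over alpha' = h~ + 1/(n+1) and all slopes gives a
   countable union of null exceptional events. *)

From Stdlib Require Import Reals List Lra Lia ZArith Classical FinFun
  FunctionalExtensionality PropExtensionality.
Open Scope R_scope.

Lemma set_ext {Omega : Type} (A B : Omega -> Prop) :
  (forall w, A w <-> B w) -> A = B.
Proof.
  intro H; apply functional_extensionality; intro w.
  apply propositional_extensionality; auto.
Qed.

Section SigmaAlgebra.
Context {Omega : Type} (S : (Omega -> Prop) -> Prop) (HS : is_sigma_algebra S).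

Lemma sa_ext {A B} : S A -> (forall w, A w <-> B w) -> S B.
Proof. intros HA H; rewrite <- (set_ext _ _ H); auto. Qed.

Lemma sa_empty : S (fun _ => False).
Proof. apply (sa_ext (sa_compl _ HS _ (sa_full _ HS))); firstorder. Qed.

Lemma sa_not A : S A -> S (fun w => ~ A w).
Proof. apply (sa_compl _ HS). Qed.

Lemma sa_exn (E : nat -> Omega -> Prop) :
  (forall n, S (E n)) -> S (fun w => exists n, E n w).
Proof. apply (sa_union _ HS). Qed.

Lemma sa_or A B : S A -> S B -> S (fun w => A w \/ B w).
Proof.
  intros HA HB.
  apply (@sa_ext (fun w => exists n : nat, (if Nat.eqb n 0 then A else B) w)).
  - apply sa_exn; intro n; destruct (Nat.eqb n 0); auto.
  - intro w; split.
    + intros [n Hn]; destruct (Nat.eqb n 0); auto.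
    + intros [H|H]; [exists 0%nat | exists 1%nat]; auto.
Qed.

Lemma sa_and A B : S A -> S B -> S (fun w => A w /\ B w).
Proof.
  intros HA HB.
  apply (sa_ext (sa_not _ (sa_or _ _ (sa_not _ HA) (sa_not _ HB)))).
  intro w; split; [|tauto].
  intro H; apply not_or_and in H; destruct H; split; apply NNPP; auto.
Qed.

Lemma sa_alln (E : nat -> Omega -> Prop) :
  (forall n, S (E n)) -> S (fun w => forall n, E n w).
Proof.
  intro H.
  apply (sa_ext (sa_not _ (sa_exn (fun n w => ~ E n w) (fun n => sa_not _ (H n))))).
  intro w; split.
  - intros H1 n; apply NNPP; intro H2; apply H1; eauto.
  - intros H1 [n Hn]; auto.
Qed.

Lemma sa_prop_imp (Q : Prop) A : S A -> S (fun w => Q -> A w).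
Proof.
  intro HA; destruct (classic Q).
  - apply (sa_ext HA); intuition.
  - apply (sa_ext (sa_full _ HS)); intuition.
Qed.

Lemma sa_prop_and (Q : Prop) A : S A -> S (fun w => Q /\ A w).
Proof.
  intro HA; destruct (classic Q).
  - apply (sa_ext HA); intuition.
  - apply (sa_ext sa_empty); intuition.
Qed.

Lemma sa_all_list {T} (l : list T) (E : T -> Omega -> Prop) :
  (forall x, In x l -> S (E x)) -> S (fun w => forall x, In x l -> E x w).
Proof.
  induction l as [|a l IH]; intro H.
  - apply (sa_ext (sa_full _ HS)); simpl; intuition.
  - apply (sa_ext (sa_and _ _ (H a (or_introl eq_refl))
                    (IH (fun x Hx => H x (or_intror Hx))))).
    intro w; simpl; split; [intros [H1 H2] x [<-|Hx]; auto | intro H1; split; auto].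
Qed.

Lemma sa_ex_list {T} (l : list T) (E : T -> Omega -> Prop) :
  (forall x, In x l -> S (E x)) -> S (fun w => exists x, In x l /\ E x w).
Proof.
  induction l as [|a l IH]; intro H.
  - apply (sa_ext sa_empty); simpl; firstorder.
  - apply (sa_ext (sa_or _ _ (H a (or_introl eq_refl))
                    (IH (fun x Hx => H x (or_intror Hx))))).
    intro w; simpl; split.
    + intros [H1|[x [H1 H2]]]; eauto.
    + intros [x [[<-|Hx] H2]]; eauto.
Qed.
End SigmaAlgebra.

Lemma gen_sigma_sa {Omega I : Type} (Y : I -> Omega -> bool) (V : I -> Prop) :
  is_sigma_algebra (gen_sigma Y V).
Proof. constructor; [apply gs_full | apply gs_compl | apply gs_union]. Qed.

Lemma gen_sigma_mono {Omega I : Type} (Y : I -> Omega -> bool) (V V' : I -> Prop) E :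
  (forall v, V v -> V' v) -> gen_sigma Y V E -> gen_sigma Y V' E.
Proof.
  intros HV H; induction H.
  - apply gs_base; auto.
  - apply gs_full.
  - apply gs_compl; auto.
  - apply gs_union; auto.
Qed.

Lemma gen_sigma_sub {Omega I : Type} (Y : I -> Omega -> bool) (V : I -> Prop) F E :
  is_sigma_algebra F -> (forall v b, F (fun w => Y v w = b)) ->
  gen_sigma Y V E -> F E.
Proof.
  intros HF HY H; induction H.
  - apply HY.
  - apply (sa_full _ HF).
  - apply (sa_compl _ HF); auto.
  - apply (sa_union _ HF); auto.
Qed.

Lemma sum_f_R0_two (f : nat -> R) n :
  (forall k, (2 <= k)%nat -> f k = 0) -> (1 <= n)%nat ->
  sum_f_R0 f n = f 0%nat + f 1%nat.
Proof.
  intros Hf Hn; induction n; [lia|].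
  destruct n; [simpl; auto|].
  rewrite tech5, IHn by lia. rewrite (Hf (S (S n))) by lia; lra.
Qed.

Section Probability.
Context {Omega : Type} (F : (Omega -> Prop) -> Prop) (P : (Omega -> Prop) -> R)
  (HP : is_probability F P).

Let HS := pr_sigma _ _ HP.

Lemma P_ext A B : (forall w, A w <-> B w) -> P A = P B.
Proof. intro H; rewrite (set_ext _ _ H); auto. Qed.

Lemma P_nonneg A : F A -> 0 <= P A.
Proof. apply (pr_nonneg _ _ HP). Qed.

(** Countable additivity for the constant empty family forces P(empty) = 0:
    otherwise the partial sums n * P(empty) could not converge. *)
Lemma P_empty : P (fun _ => False) = 0.
Proof.
  assert (H := pr_countably_additive _ _ HP (fun _ _ => False)
                 (fun _ => sa_empty _ HS) (fun _ _ _ _ h _ => h)).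
  cbv beta in H.
  rewrite (P_ext (fun w => exists n : nat, False) (fun _ => False)) in H by firstorder.
  set (c := P (fun _ => False)) in *.
  assert (Hc : 0 <= c) by (apply P_nonneg, (sa_empty _ HS)).
  destruct (Rle_lt_or_eq_dec _ _ Hc) as [Hlt|]; [|auto].
  exfalso. destruct (H c Hlt) as [N HN].
  specialize (HN (S N) (Nat.le_succ_diag_r N)).
  assert (Hsum : forall n, sum_f_R0 (fun _ => c) n = INR (S n) * c).
  { induction n; [simpl; lra | rewrite tech5, IHn, (S_INR (S n)); lra]. }
  rewrite Hsum in HN; unfold R_dist in HN.
  assert (0 <= INR N) by apply pos_INR.
  rewrite (S_INR (S N)), (S_INR N), Rabs_right in HN; nra.
Qed.

Lemma P_add A B : F A -> F B -> (forall w, A w -> B w -> False) ->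
  P (fun w => A w \/ B w) = P A + P B.
Proof.
  intros HA HB Hd.
  set (E := fun n : nat => match n with
                           | 0%nat => A | 1%nat => B | _ => fun _ => False end).
  assert (HE : forall n, F (E n)) by (intros [|[|n]]; simpl; auto; apply (sa_empty _ HS)).
  assert (Hdis : forall m n, m <> n -> forall w, E m w -> E n w -> False).
  { intros [|[|m]] [|[|n]] Hmn w; simpl; try tauto; try lia; eauto. }
  assert (H := pr_countably_additive _ _ HP E HE Hdis).
  rewrite (P_ext (fun w => exists n, E n w) (fun w => A w \/ B w)) in H.
  2:{ intro w; split.
      - intros [[|[|n]] Hn]; simpl in Hn; tauto.
      - intros [h|h]; [exists 0%nat | exists 1%nat]; auto. }
  apply (uniqueness_sum _ _ _ H).
  intros eps He; exists 1%nat; intros n Hn.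
  rewrite (sum_f_R0_two (fun n => P (E n)) n); auto.
  - simpl; unfold R_dist; rewrite Rminus_diag_eq, Rabs_R0; auto.
  - intros [|[|k]] Hk; try lia; apply P_empty.
Qed.

Lemma P_mono A B : F A -> F B -> (forall w, A w -> B w) -> P A <= P B.
Proof.
  intros HA HB H.
  assert (HBA : F (fun w => B w /\ ~ A w)) by (apply sa_and, sa_not; auto).
  rewrite (P_ext B (fun w => A w \/ (B w /\ ~ A w))).
  - rewrite P_add; auto; [|intros w h [_ h']; auto].
    assert (0 <= P (fun w => B w /\ ~ A w)) by (apply P_nonneg; auto). lra.
  - intro w; split; [intro h; destruct (classic (A w)); auto | intros [h|[h _]]; auto].
Qed.

Lemma P_le1 A : F A -> P A <= 1.
Proof. intro HA; rewrite <- (pr_full _ _ HP); apply P_mono; auto; apply (sa_full _ HS). Qed.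

Lemma P_compl A : F A -> P (fun w => ~ A w) = 1 - P A.
Proof.
  intro HA. rewrite <- (pr_full _ _ HP).
  rewrite (P_ext (fun _ => True) (fun w => A w \/ ~ A w))
    by (intro w; split; [intros _; apply classic | auto]).
  rewrite P_add; auto; [lra | apply sa_not; auto].
Qed.

Lemma P_subadd A B : F A -> F B -> P (fun w => A w \/ B w) <= P A + P B.
Proof.
  intros HA HB.
  assert (HBA : F (fun w => B w /\ ~ A w)) by (apply sa_and, sa_not; auto).
  rewrite (P_ext (fun w => A w \/ B w) (fun w => A w \/ (B w /\ ~ A w))).
  - rewrite P_add; auto; [|intros w h [_ h']; auto].
    assert (P (fun w => B w /\ ~ A w) <= P B) by (apply P_mono; auto; tauto). lra.
  - intro w; split; [intros [h|h]; destruct (classic (A w)); auto | intros [h|[h _]]; auto].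
Qed.

Lemma P_subadd_list {T} (l : list T) (E : T -> Omega -> Prop) :
  (forall x, In x l -> F (E x)) ->
  P (fun w => exists x, In x l /\ E x w) <= fold_right (fun x acc => P (E x) + acc) 0 l.
Proof.
  induction l as [|a l IH]; intro H; simpl.
  - rewrite (P_ext _ (fun _ => False)) by firstorder. rewrite P_empty; lra.
  - rewrite (P_ext _ (fun w => E a w \/ exists x, In x l /\ E x w)).
    2:{ intro w; split; [intros [x [[<-|Hx] h]]; eauto | intros [h|[x [Hx h]]]; eauto]. }
    assert (Ha : F (E a)) by (apply H; simpl; auto).
    assert (Hl : forall x, In x l -> F (E x)) by (intros x Hx; apply H; simpl; auto).
    assert (Hsub := P_subadd _ _ Ha (sa_ex_list _ HS _ _ Hl)).
    specialize (IH Hl). lra.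
Qed.

Definition negligible (A : Omega -> Prop) : Prop := F A /\ P A = 0.

(** Countable unions of null events are null (disjointify, then use
    countable additivity). *)
Lemma negligible_exn (A : nat -> Omega -> Prop) :
  (forall n, negligible (A n)) -> negligible (fun w => exists n, A n w).
Proof.
  intro HA. assert (HAF : forall n, F (A n)) by (intro n; apply HA).
  split; [apply sa_exn; auto|].
  set (B := fun n w => A n w /\ ~ exists i, (i < n)%nat /\ A i w).
  assert (HB : forall n, F (B n)).
  { intro n; apply sa_and, sa_not, sa_exn; auto; intro i; apply sa_prop_and; auto. }
  assert (Hd : forall m n, m <> n -> forall w, B m w -> B n w -> False).
  { intros m n Hmn w [h1 h2] [h3 h4].
    destruct (Nat.lt_gt_cases m n) as [[h|h] _]; auto; [apply h4 | apply h2]; eauto. }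
  assert (H := pr_countably_additive _ _ HP B HB Hd).
  rewrite (P_ext (fun w => exists n, B n w) (fun w => exists n, A n w)) in H.
  - apply (uniqueness_sum (fun n => P (B n))); auto.
    replace (fun n => P (B n)) with (fun _ : nat => 0).
    + intros eps He; exists 0%nat; intros n _.
      replace (sum_f_R0 (fun _ => 0) n) with 0 by (induction n; simpl; lra).
      unfold R_dist; rewrite Rminus_0_r, Rabs_R0; auto.
    + apply functional_extensionality; intro n. apply Rle_antisym.
      * apply P_nonneg; auto.
      * destruct (HA n) as [_ H0]; rewrite <- H0; apply P_mono; auto; intros w [h _]; auto.
  - intro w; split; [intros [n [h _]]; eauto|].
    intros [n Hn]. induction n as [n IH] using (well_founded_induction Wf_nat.lt_wf).
    destruct (classic (exists i, (i < n)%nat /\ A i w)) as [[i [Hi Ai]]|hn].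
    + apply (IH i); auto.
    + exists n; split; auto.
Qed.

Lemma almost_sure_of_negligible A :
  negligible A -> F (fun w => ~ A w) /\ P (fun w => ~ A w) = 1.
Proof. intros [HF H0]. split; [apply sa_not; auto | rewrite P_compl; auto; lra]. Qed.
End Probability.

Fixpoint words (n : nat) : list word :=
  match n with
  | O => nil :: nil
  | S n => map (cons false) (words n) ++ map (cons true) (words n)
  end.

Lemma words_In n u : In u (words n) <-> length u = n.
Proof.
  revert u; induction n as [|n IH]; intro u; simpl.
  - split; [intros [<-|[]]; auto | destruct u; simpl; auto; discriminate].
  - rewrite in_app_iff, !in_map_iff. split.
    + intros [[v [<- Hv]]|[v [<- Hv]]]; simpl; f_equal; apply IH; auto.
    + destruct u as [|b u]; simpl; [discriminate|]. intro H; injection H; intro H'.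
      destruct b; [right | left]; exists u; split; auto; apply IH; auto.
Qed.

Lemma words_NoDup n : NoDup (words n).
Proof.
  induction n; simpl; [constructor; auto; constructor|].
  apply NoDup_app.
  - apply Injective_map_NoDup; auto. intros a b H; injection H; auto.
  - apply Injective_map_NoDup; auto. intros a b H; injection H; auto.
  - intros x H1 H2. apply in_map_iff in H1, H2.
    destruct H1 as [a [<- _]]; destruct H2 as [b [H _]]; discriminate.
Qed.

Lemma words_length n : length (words n) = Nat.pow 2 n.
Proof.
  induction n; [reflexivity|]. cbn [words].
  rewrite length_app, !length_map. change (list bool) with word. rewrite IHn. simpl. lia.
Qed.

Lemma xval_bounds v : 0 <= xval v < 1.
Proof. induction v as [|b v IH]; simpl; [lra|]. destruct b; lra. Qed.

Lemma xval_app w v : xval (w ++ v) = xval w + xval v / 2 ^ (length w).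
Proof.
  induction w as [|b w IH]; simpl; [field|].
  rewrite IH. field. apply pow_nonzero; lra.
Qed.

Lemma xval_app_bounds w v : xval w <= xval (w ++ v) < xval w + / 2 ^ (length w).
Proof.
  rewrite xval_app. assert (H := xval_bounds v).
  assert (Hp : 0 < / 2 ^ length w) by (apply Rinv_0_lt_compat, pow_lt; lra).
  unfold Rdiv. nra.
Qed.

Lemma dyadic_cell m : forall y, 0 <= y < 1 ->
  exists w, length w = m /\ xval w <= y < xval w + / 2 ^ m.
Proof.
  induction m as [|m IH]; intros y Hy.
  - exists nil; simpl; split; auto; lra.
  - destruct (Rlt_le_dec y (1/2)) as [H|H].
    + destruct (IH (2 * y)) as [w [Hl Hw]]; [lra|].
      exists (false :: w); simpl; split; [auto|]. rewrite Rinv_mult. lra.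
    + destruct (IH (2 * y - 1)) as [w [Hl Hw]]; [lra|].
      exists (true :: w); simpl; split; [auto|]. rewrite Rinv_mult. lra.
Qed.

Lemma Int_part_char r z : IZR z <= r < IZR z + 1 -> Int_part r = z.
Proof.
  intros [H1 H2].
  assert (Hu : (z + 1)%Z = up r) by (apply tech_up; rewrite plus_IZR; simpl; lra).
  unfold Int_part; rewrite <- Hu; lia.
Qed.

Lemma tdist_le x z : Rabs (frac_part x - z) < 1 -> tdist x z <= Rabs (frac_part x - z).
Proof.
  intro H. set (e := frac_part x - z) in *.
  assert (Hx : x - z = IZR (Int_part x) + e) by (unfold e, frac_part; ring).
  unfold tdist. rewrite Hx.
  destruct (Rle_lt_dec 0 e) as [He|He].
  - assert (Hf : frac_part (IZR (Int_part x) + e) = e).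
    { assert (Hi : Int_part (IZR (Int_part x) + e) = Int_part x).
      { apply Int_part_char. rewrite Rabs_right in H by lra. lra. }
      unfold frac_part at 1. rewrite Hi. ring. }
    rewrite Hf, Rabs_right by lra. apply Rmin_l.
  - assert (Hf : frac_part (IZR (Int_part x) + e) = e + 1).
    { assert (Hi : Int_part (IZR (Int_part x) + e) = (Int_part x - 1)%Z).
      { apply Int_part_char. rewrite Rabs_left in H by lra. rewrite minus_IZR. lra. }
      unfold frac_part at 1. rewrite Hi, minus_IZR. ring. }
    rewrite Hf, Rabs_left by lra. eapply Rle_trans; [apply Rmin_r | lra].
Qed.

Lemma tdist_cell x m : exists w, length w = m /\
  forall v, tdist x (xval (w ++ v)) < / 2 ^ m.
Proof.
  destruct (base_fp x) as [Hx0 Hx1].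
  destruct (dyadic_cell m (frac_part x)) as [w [Hl Hw]]; [lra|].
  exists w; split; auto; intro v.
  assert (Hb := xval_app_bounds w v). rewrite Hl in Hb.
  assert (Hp : / 2 ^ m <= 1).
  { rewrite <- Rinv_1; apply Rinv_le_contravar; [lra|]; apply pow_R1_Rle; lra. }
  assert (Hab : Rabs (frac_part x - xval (w ++ v)) < / 2 ^ m) by (apply Rabs_def1; lra).
  eapply Rle_lt_trans; [apply tdist_le; lra | exact Hab].
Qed.
Lemma sum_jr_closed r n :
  sum_f_R0 (fun j => (INR j + 1) * r ^ j) n * (1 - r) ^ 2
  = 1 - (INR n + 2) * r ^ (S n) + (INR n + 1) * r ^ (S (S n)).
Proof.
  induction n; [simpl; ring|].
  rewrite tech5, Rmult_plus_distr_r, IHn, S_INR. simpl. ring.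
Qed.

Lemma sum_jr_bound r n : 0 <= r < 1 ->
  sum_f_R0 (fun j => (INR j + 1) * r ^ j) n <= / (1 - r) ^ 2.
Proof.
  intro Hr.
  assert (Hp : 0 < (1 - r) ^ 2) by (apply pow_lt; lra).
  assert (Hk : (INR n + 1) * r ^ S (S n) <= (INR n + 2) * r ^ S n).
  { simpl. assert (0 <= r ^ n) by (apply pow_le; lra).
    assert (0 <= INR n) by apply pos_INR.
    assert (0 <= r * r ^ n) by (apply Rmult_le_pos; lra).
    assert (r * (r * r ^ n) <= r * r ^ n) by
      (rewrite <- (Rmult_1_l (r * r ^ n)) at 2; apply Rmult_le_compat_r; lra).
    nra. }
  apply (Rmult_le_reg_r ((1 - r) ^ 2)); auto.
  rewrite sum_jr_closed, Rinv_l by lra. lra.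
Qed.

Lemma sum_mono (f : nat -> R) a b :
  (forall j, 0 <= f j) -> (a <= b)%nat -> sum_f_R0 f a <= sum_f_R0 f b.
Proof.
  intros Hf Hab. induction Hab; [lra|]. rewrite tech5. specialize (Hf (S m)). lra.
Qed.

Lemma not_diverges_dominated (f : nat -> R) C r N :
  (forall j, 0 <= f j) -> 0 <= C -> 0 <= r < 1 ->
  (forall j, (N <= j)%nat -> f j <= C * ((INR j + 1) * r ^ j)) -> ~ diverges f.
Proof.
  intros Hf HC Hr Hb Hd.
  set (g := fun j => (INR j + 1) * r ^ j).
  assert (Hg : forall n, 0 <= C * sum_f_R0 g n).
  { intro n; apply Rmult_le_pos; auto; apply cond_pos_sum; intro j.
    apply Rmult_le_pos; [assert (0 <= INR j) by apply pos_INR; lra | apply pow_le; lra]. }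
  assert (Hall : forall n, sum_f_R0 f n <= sum_f_R0 f N + C * sum_f_R0 g n).
  { induction n.
    - assert (sum_f_R0 f 0 <= sum_f_R0 f N) by (apply sum_mono; auto; lia).
      specialize (Hg 0%nat); lra.
    - destruct (Compare_dec.le_lt_dec (S n) N).
      + assert (sum_f_R0 f (S n) <= sum_f_R0 f N) by (apply sum_mono; auto).
        specialize (Hg (S n)); lra.
      + rewrite !tech5. specialize (Hb (S n) ltac:(lia)). unfold g at 2. lra. }
  destruct (Hd (sum_f_R0 f N + C * / (1 - r) ^ 2)) as [n Hn].
  specialize (Hall n). assert (H := sum_jr_bound r n Hr).
  assert (C * sum_f_R0 g n <= C * / (1 - r) ^ 2) by (apply Rmult_le_compat_l; auto).
  lra.
Qed.

Lemma Rpower_pos a x : 0 < Rpower a x.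
Proof. apply exp_pos. Qed.

Lemma Rpower_pow_mult a j : Rpower 2 (a * INR j) = Rpower 2 a ^ j.
Proof. rewrite <- Rpower_pow by apply Rpower_pos. rewrite Rpower_mult; auto. Qed.

Lemma pow2_Rpower k : 2 ^ k = Rpower 2 (INR k).
Proof. rewrite Rpower_pow; auto; lra. Qed.

Lemma Rpower2_lt1 a : a < 0 -> 0 <= Rpower 2 a < 1.
Proof.
  intro Ha; split; [left; apply Rpower_pos|].
  rewrite <- (Rpower_O 2) by lra. apply Rpower_lt; lra.
Qed.

Lemma eta_bounds nu j : is_prob_on_pairs nu -> 0 <= eta nu j <= 1.
Proof.
  intro H; destruct (H false j) as [H1 H2]. unfold eta.
  assert (h1 := H1 (false, false)); assert (h2 := H1 (false, true));
  assert (h3 := H1 (true, false)); assert (h4 := H1 (true, true)).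
  lra.
Qed.

(** [h~ >= hb]: for [h < hb] the series [sum 2^((1-hb/h) j) eta_j] has
    geometrically decaying terms. *)
Lemma htilde_lower nu hb h : is_prob_on_pairs nu -> 0 < hb -> htilde_set nu hb h -> hb <= h.
Proof.
  intros Hnu Hhb [Hh Hd].
  destruct (Rle_lt_dec hb h) as [|Hlt]; auto. exfalso.
  set (a := 1 - hb / h) in Hd.
  assert (Ha : a < 0).
  { unfold a. enough (1 < hb / h) by lra.
    apply (Rmult_lt_reg_r h); auto; unfold Rdiv; rewrite Rmult_assoc, Rinv_l; lra. }
  apply (not_diverges_dominated (fun j => Rpower 2 (a * INR j) * eta nu j)
           1 (Rpower 2 a) 0); auto; [| lra | apply Rpower2_lt1; auto |].
  - intro j. apply Rmult_le_pos; [left; apply Rpower_pos | apply eta_bounds; auto].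
  - intros j _. rewrite Rpower_pow_mult.
    assert (0 <= Rpower 2 a ^ j) by (apply pow_le; left; apply Rpower_pos).
    assert (he := eta_bounds nu j Hnu). assert (0 <= INR j) by apply pos_INR.
    nra.
Qed.

(** If [j + 1 <= eta 2^k], the probability bound [2^(j-k) (1-eta)^(2^k)]
    on bad cylinders is at most 1/2 (using [1 - eta <= exp(-eta)] and [2 < e]). *)
Lemma bad_cylinder_bound_half eta j k : 0 <= eta <= 1 -> (k <= j)%nat ->
  INR (S j) <= eta * 2 ^ k ->
  2 ^ (j - k) * (1 - eta) ^ (Nat.pow 2 k) <= / 2.
Proof.
  intros He Hk Hj.
  assert (exp_le : forall x y, x <= y -> exp x <= exp y).
  { intros x y Hxy; destruct (Rle_lt_or_eq_dec _ _ Hxy) as [h|h].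
    - left; apply exp_increasing; auto.
    - rewrite h; lra. }
  assert (exp_pow : forall x n, exp x ^ n = exp (INR n * x)).
  { intros x n; induction n; simpl.
    - rewrite Rmult_0_l, exp_0; auto.
    - rewrite IHn, <- exp_plus. f_equal. destruct n; simpl; ring. }
  assert (H1 : (1 - eta) ^ (Nat.pow 2 k) <= exp (- INR (S j))).
  { apply Rle_trans with (exp (- eta) ^ Nat.pow 2 k).
    - apply pow_incr; split; [lra|]. assert (h := exp_ineq1_le (- eta)). lra.
    - rewrite exp_pow, pow_INR. apply exp_le. simpl INR at 1.
      replace (1 + 1) with 2 by ring. lra. }
  assert (He1 : 2 < exp 1) by (assert (h := exp_ineq1 1); lra).
  assert (H2 : 2 ^ (j - k) <= exp (INR j)).
  { eapply Rle_trans; [apply Rle_pow; [lra | apply (Nat.le_sub_l j k)]|].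
    apply Rle_trans with (exp 1 ^ j); [apply pow_incr; split; [lra | left; exact He1]|].
    rewrite exp_pow, Rmult_1_r; lra. }
  eapply Rle_trans.
  { apply Rmult_le_compat; [apply pow_le; lra | apply pow_le; lra | exact H2 | exact H1]. }
  rewrite <- exp_plus, S_INR. replace (INR j + - (INR j + 1)) with (- (1)) by ring.
  rewrite exp_Ropp. apply Rinv_le_contravar; lra.
Qed.
Lemma strict_ext_len u v : strict_ext u v -> (length u < length v)%nat.
Proof. intros [w [Hw ->]]. rewrite length_app. destruct w; [congruence | simpl; lia]. Qed.

Lemma strict_ext_child u u' b :
  length u' = length u -> u' <> u -> ~ strict_ext u (u' ++ b :: nil).
Proof.
  intros Hl Hne [w [Hw He]].
  assert (Hlw : length w = 1%nat).
  { apply (f_equal (@length bool)) in He. rewrite !length_app in He. simpl in He. lia. }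
  destruct w as [|c [|d w]]; simpl in Hlw; try lia.
  apply app_inj_tail in He. destruct He; congruence.
Qed.

Section Branching.
Context {Omega : Type} (F : (Omega -> Prop) -> Prop) (P : (Omega -> Prop) -> R)
  (nu : bool -> nat -> bool * bool -> R) (X : word -> Omega -> bool)
  (HP : is_probability F P) (Hnu : is_prob_on_pairs nu)
  (HX : forall u b, F (fun w => X u w = b))
  (HB : branching_property P nu X).

Let HS := pr_sigma _ _ HP.

Definition upto (j : nat) := gen_sigma X (fun v => (length v <= j)%nat).

Lemma upto_F j G : upto j G -> F G.
Proof. intro H; eapply gen_sigma_sub; eauto. Qed.

Lemma upto_mono j j' G : (j <= j')%nat -> upto j G -> upto j' G.
Proof. intros Hj H; eapply gen_sigma_mono; [|exact H]; simpl; intros; lia. Qed.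

Definition silent (u : word) (w : Omega) : Prop :=
  X u w = false /\ X (u ++ false :: nil) w = false /\ X (u ++ true :: nil) w = false.

Lemma silent_meas (V : word -> Prop) u :
  V u -> V (u ++ false :: nil) -> V (u ++ true :: nil) -> gen_sigma X V (silent u).
Proof.
  intros H1 H2 H3. unfold silent.
  apply sa_and; [apply gen_sigma_sa | apply gs_base; auto|].
  apply sa_and; [apply gen_sigma_sa | apply gs_base; auto | apply gs_base; auto].
Qed.

Lemma silent_F u : F (silent u).
Proof. eapply gen_sigma_sub; eauto. apply (silent_meas (fun _ => True)); auto. Qed.

(** Branching property with [A = {(0,0)}]: given the information outside the
    subtree of [u], the node [u] is silent with probability at most
    [nu_(0,|u|)(0,0) = 1 - eta_|u|]. *)
Lemma silent_step u H :
  gen_sigma X (fun v => ~ strict_ext u v) H ->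
  P (fun w => silent u w /\ H w) <= (1 - eta nu (length u)) * P H.
Proof.
  intro HH.
  set (A := fun p : bool * bool => match p with (false, false) => true | _ => false end).
  set (H0 := fun w => H w /\ X u w = false).
  assert (Hu : ~ strict_ext u u) by (intro Hs; apply strict_ext_len in Hs; lia).
  assert (HH0 : gen_sigma X (fun v => ~ strict_ext u v) H0)
    by (apply sa_and; [apply gen_sigma_sa | auto | apply gs_base; auto]).
  assert (Hbr := HB u A H0 HH0).
  rewrite (P_ext P _ (fun w => silent u w /\ H w)) in Hbr.
  2:{ intro w; unfold A, H0, silent; split.
      - intros [Ha [Hw Hx]].
        destruct (X (u ++ false :: nil) w), (X (u ++ true :: nil) w); try discriminate; auto.
      - intros [[h1 [h2 h3]] Hw]. rewrite h2, h3; auto. }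
  rewrite (P_ext P (fun w => H0 w /\ X u w = true) (fun _ => False)) in Hbr.
  2:{ intro w; unfold H0; split; [intros [[_ h1] h2]; congruence | tauto]. }
  rewrite (P_empty F P HP), Rmult_0_r, Rplus_0_r in Hbr.
  replace (nuA nu false (length u) A) with (1 - eta nu (length u)) in Hbr
    by (unfold nuA, A, eta; simpl; ring).
  rewrite Hbr.
  assert (HFH : F H) by (eapply gen_sigma_sub; eauto).
  assert (HFH0 : F H0) by (eapply gen_sigma_sub; eauto).
  assert (Hp := eta_bounds nu (length u) Hnu).
  apply Rmult_le_compat_l; [lra|].
  apply (P_mono F P HP); [apply sa_and | |]; auto; unfold H0; tauto.
Qed.

Lemma all_silent_bound j (L : list word) :
  NoDup L -> (forall u, In u L -> length u = j) ->
  forall G, upto j G ->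
  P (fun w => (forall u, In u L -> silent u w) /\ G w) <= (1 - eta nu j) ^ (length L) * P G.
Proof.
  induction L as [|u L IH]; intros Hnd Hl G HG; simpl.
  - rewrite (P_ext P _ G) by (intro w; simpl; tauto). lra.
  - inversion Hnd as [|? ? Hu HndL]; subst.
    assert (Hlu : length u = j) by (apply Hl; left; reflexivity).
    set (H := fun w => (forall u', In u' L -> silent u' w) /\ G w).
    assert (HH : gen_sigma X (fun v => ~ strict_ext u v) H).
    { unfold H. apply sa_and; [apply gen_sigma_sa | |].
      - apply sa_all_list; [apply gen_sigma_sa|]. intros u' Hu'.
        assert (Hl' : length u' = length u) by (rewrite Hlu; apply Hl; right; auto).
        assert (Hne : u' <> u) by (intro; subst; auto).
        apply silent_meas; try (apply strict_ext_child; auto).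
        intro Hs; apply strict_ext_len in Hs; lia.
      - eapply gen_sigma_mono; [|exact HG].
        intros v Hv Hs; cbv beta in Hv; apply strict_ext_len in Hs; lia. }
    rewrite (P_ext P _ (fun w => silent u w /\ H w)).
    2:{ intro w; unfold H; split.
        - intros [HL HG']; repeat split; auto; apply HL; auto.
        - intros [Hs [HL HG']]; split; auto. intros u0 [<-|Hu0]; auto. }
    eapply Rle_trans; [apply silent_step; auto|]. rewrite Hlu.
    assert (Hp := eta_bounds nu j Hnu).
    assert (Hpow : 0 <= (1 - eta nu j) ^ length L) by (apply pow_le; lra).
    simpl pow; rewrite Rmult_assoc. apply Rmult_le_compat_l; [lra|].
    apply IH; auto. intros u0 Hu0; apply Hl; right; auto.
Qed.

Definition has_bad_cylinder (j k : nat) (w : Omega) : Prop :=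
  exists pre, In pre (words (j - k)) /\ forall v, In v (words k) -> silent (pre ++ v) w.

Lemma has_bad_cylinder_meas j k : (k <= j)%nat -> upto (S j) (has_bad_cylinder j k).
Proof.
  intro Hk. unfold has_bad_cylinder.
  apply sa_ex_list; [apply gen_sigma_sa|]. intros pre Hpre.
  apply sa_all_list; [apply gen_sigma_sa|]. intros v Hv.
  apply words_In in Hpre, Hv.
  apply silent_meas; rewrite ?length_app; simpl; rewrite ?length_app; simpl; lia.
Qed.

Lemma fold_sum_bound {T} (l : list T) (g : T -> R) c :
  (forall x, In x l -> g x <= c) -> fold_right (fun x acc => g x + acc) 0 l <= INR (length l) * c.
Proof.
  induction l as [|a l IH]; intro H; [simpl; lra|].
  change (length (a :: l)) with (S (length l)). rewrite S_INR. simpl fold_right.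
  assert (g a <= c) by (apply H; left; auto).
  assert (fold_right (fun x acc => g x + acc) 0 l <= INR (length l) * c)
    by (apply IH; intros; apply H; right; auto).
  lra.
Qed.

(** Union bound over the [2^(j-k)] cylinders, each bad with conditional
    probability at most [(1-eta_j)^(2^k)]. *)
Lemma bad_cylinder_bound j k G : (k <= j)%nat -> upto j G ->
  P (fun w => has_bad_cylinder j k w /\ G w)
  <= 2 ^ (j - k) * ((1 - eta nu j) ^ (Nat.pow 2 k) * P G).
Proof.
  intros Hk HG.
  rewrite (P_ext P _ (fun w => exists pre, In pre (words (j - k)) /\
      ((forall u, In u (map (app pre) (words k)) -> silent u w) /\ G w))).
  2:{ intro w; unfold has_bad_cylinder; split.
      - intros [[pre [Hp Hv]] Hg]; exists pre; split; auto; split; auto.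
        intros u Hu; apply in_map_iff in Hu; destruct Hu as [v [<- Hv']]; auto.
      - intros [pre [Hp [Hv Hg]]]; split; auto; exists pre; split; auto.
        intros v Hv'; apply Hv, in_map_iff; eauto. }
  eapply Rle_trans; [apply (P_subadd_list F P HP)|].
  - intros pre Hpre. apply sa_and; auto.
    + apply sa_all_list; auto. intros u _. apply silent_F.
    + apply (upto_F j); auto.
  - replace (2 ^ (j - k)) with (INR (length (words (j - k))))
      by (rewrite words_length, pow_INR; simpl; f_equal; ring).
    apply fold_sum_bound. intros pre Hpre.
    assert (H := all_silent_bound j (map (app pre) (words k))).
    rewrite length_map, words_length in H. apply H; auto.
    + apply Injective_map_NoDup; [intros a b Hab; eapply app_inv_head; eauto | apply words_NoDup].
    + intros u Hu; apply in_map_iff in Hu; destruct Hu as [v [<- Hv]].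
      apply words_In in Hpre, Hv. rewrite length_app; lia.
Qed.

(** Along a set of [good] levels where the bad-cylinder bound is at most
    1/2, bad cylinders cannot occur at all good levels beyond [N], except on
    a null event: conditioning on the first generations halves the
    probability at each new good level. *)
Section GoodLevels.
Variable good : nat -> Prop.
Variable k : nat -> nat.
Hypothesis Hk : forall j, (k j <= j)%nat.
Hypothesis Hgood : forall j, good j -> 2 ^ (j - k j) * (1 - eta nu j) ^ (Nat.pow 2 (k j)) <= / 2.
Hypothesis Hinf : forall N, exists j, (N <= j)%nat /\ good j.

Definition bad_between (N M : nat) (w : Omega) : Prop :=
  forall j, (N <= j)%nat -> (j <= M)%nat -> good j -> has_bad_cylinder j (k j) w.

Lemma bad_between_meas N M : upto (S M) (bad_between N M).
Proof.
  apply (@sa_ext _ _ (fun w => forall j, In j (seq 0 (S M)) ->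
                        (N <= j)%nat -> good j -> has_bad_cylinder j (k j) w)).
  - apply sa_all_list; [apply gen_sigma_sa|]. intros j Hj. apply in_seq in Hj.
    do 2 (apply sa_prop_imp; [apply gen_sigma_sa|]).
    apply (upto_mono (S j)); [lia|]. apply has_bad_cylinder_meas; auto.
  - intro w; unfold bad_between; split.
    + intros H j Hn Hm Hg; apply H; auto; apply in_seq; lia.
    + intros H j Hj Hn Hg; apply in_seq in Hj; apply H; auto; lia.
Qed.

Lemma bad_between_F N M : F (bad_between N M).
Proof. apply (upto_F (S M)), bad_between_meas. Qed.

Lemma bad_between_decay N r : exists M, P (bad_between N M) <= (/ 2) ^ r.
Proof.
  induction r as [|r [M HM]].
  - exists 0%nat. apply (P_le1 F P HP), bad_between_F.
  - destruct (Hinf (S (Nat.max N M))) as [[|j] [Hj Hg]]; [lia|].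
    exists (S j).
    rewrite (P_ext P (bad_between N (S j))
               (fun w => has_bad_cylinder (S j) (k (S j)) w /\ bad_between N j w)).
    2:{ intro w; unfold bad_between; split.
        - intro H; split; [apply H; auto; lia|]. intros i Hi1 Hi2 Hgi; apply H; auto.
        - intros [Hb H] i Hi1 Hi2 Hgi.
          destruct (Nat.eq_dec i (S j)) as [->|]; auto. apply H; auto; lia. }
    eapply Rle_trans; [apply bad_cylinder_bound; auto; apply bad_between_meas|].
    assert (HPD : P (bad_between N j) <= P (bad_between N M)).
    { apply (P_mono F P HP); try apply bad_between_F.
      intros w H i Hi1 Hi2 Hgi; apply H; auto; lia. }
    assert (0 <= P (bad_between N j)) by apply (P_nonneg F P HP), bad_between_F.
    assert (0 <= 2 ^ (S j - k (S j)) * (1 - eta nu (S j)) ^ Nat.pow 2 (k (S j))).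
    { assert (He := eta_bounds nu (S j) Hnu). apply Rmult_le_pos; apply pow_le; lra. }
    specialize (Hgood _ Hg). rewrite <- Rmult_assoc.
    apply Rle_trans with (/ 2 * P (bad_between N j)); [apply Rmult_le_compat_r; auto|].
    simpl pow. apply Rmult_le_compat_l; lra.
Qed.

Lemma bad_at_good_levels_negligible N :
  negligible F P (fun w => forall j, (N <= j)%nat -> good j -> has_bad_cylinder j (k j) w).
Proof.
  assert (HF : F (fun w => forall j, (N <= j)%nat -> good j -> has_bad_cylinder j (k j) w)).
  { apply sa_alln; auto; intro j. do 2 (apply sa_prop_imp; auto).
    apply (upto_F (S j)), has_bad_cylinder_meas; auto. }
  split; auto.
  set (p := P _).
  assert (Hp0 : 0 <= p) by (apply (P_nonneg F P HP); auto).
  assert (Hr : forall r, p <= (/ 2) ^ r).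
  { intro r; destruct (bad_between_decay N r) as [M HM]. eapply Rle_trans; [|exact HM].
    apply (P_mono F P HP); auto; [apply bad_between_F|]. intros w H j Hj1 Hj2 Hg; auto. }
  destruct (Rle_lt_or_eq_dec _ _ Hp0) as [Hlt|]; [|auto].
  destruct (pow_lt_1_zero (/ 2) ltac:(rewrite Rabs_right; lra) p Hlt) as [r Hr'].
  specialize (Hr' r (le_n r)). specialize (Hr r).
  rewrite Rabs_right in Hr' by (apply Rle_ge, pow_le; lra). lra.
Qed.
End GoodLevels.
End Branching.

Lemma active_of_not_silent {Omega : Type} (X : word -> Omega -> bool) u w :
  ~ silent X u w -> exists c, (length c <= 1)%nat /\ X (u ++ c) w = true.
Proof.
  intro Hs. apply NNPP; intro Hn. apply Hs.
  assert (Hc : forall c, (length c <= 1)%nat -> X (u ++ c) w = false).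
  { intros c Hc. destruct (X (u ++ c) w) eqn:Ht; auto. exfalso; apply Hn; eauto. }
  unfold silent. rewrite <- (app_nil_r u) at 1.
  repeat split; apply Hc; simpl; lia.
Qed.

Lemma active_node_near {Omega : Type} (X : word -> Omega -> bool) w j k x :
  (k <= j)%nat -> ~ has_bad_cylinder X j k w ->
  exists u, X u w = true /\ (j <= length u <= S j)%nat /\ tdist x (xval u) < / 2 ^ (j - k).
Proof.
  intros Hkj Hbad.
  destruct (tdist_cell x (j - k)) as [pre [Hpl Hclose]].
  assert (Hex : exists v, In v (words k) /\ ~ silent X (pre ++ v) w).
  { apply NNPP; intro Hn. apply Hbad. exists pre. split; [apply words_In; auto|].
    intros v Hv. apply NNPP; intro Hs. apply Hn; eauto. }
  destruct Hex as [v [Hv Hs]]. apply words_In in Hv.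
  destruct (active_of_not_silent X _ w Hs) as [c [Hc Hact]].
  exists (pre ++ v ++ c). rewrite app_assoc. repeat split; auto.
  - rewrite !length_app; lia.
  - rewrite !length_app; lia.
  - rewrite <- app_assoc; apply Hclose.
Qed.

Lemma maxlen_spec (l : list word) u :
  In u l -> (length u < S (fold_right Nat.max 0%nat (map (@length bool) l)))%nat.
Proof.
  induction l as [|a l IH]; simpl; [tauto|]. intros [<-|H]; [lia|]. specialize (IH H). lia.
Qed.

(** [x] lies in [L_alpha] as soon as active nodes of arbitrarily large
    generation approximate it at the required rate, since a finite list of
    words has bounded lengths. *)
Lemma in_L_of_close_active {Omega : Type} (X : word -> Omega -> bool) hb alpha w x :
  (forall N, exists u, X u w = true /\ (N <= length u)%nat /\
     tdist x (xval u) < Rpower 2 (- (hb * INR (length u) / alpha))) ->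
  in_L X hb alpha w x.
Proof.
  intros Hclose [l Hl].
  destruct (Hclose (S (fold_right Nat.max 0%nat (map (@length bool) l))))
    as [u [Hact [Hlen Hd]]].
  apply (Hl u Hact), maxlen_spec in Hd. lia.
Qed.

Definition slope_level (s d j : nat) : nat := (s * j / d)%nat.

Lemma slope_level_le s d j : (0 < d)%nat -> (s <= d)%nat -> (slope_level s d j <= j)%nat.
Proof. intros Hd Hs. apply Nat.Div0.div_le_upper_bound. nia. Qed.

Lemma slope_level_bounds s d j : (0 < d)%nat ->
  INR s / INR d * INR j - 1 < INR (slope_level s d j) <= INR s / INR d * INR j.
Proof.
  intro Hd. assert (HdR : 0 < INR d) by (apply lt_0_INR; auto). unfold slope_level. split.
  - assert (H := Nat.mul_succ_div_gt (s * j) d ltac:(lia)).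
    apply lt_INR in H. rewrite !mult_INR, S_INR in H.
    apply (Rmult_lt_reg_r (INR d)); auto.
    replace ((INR s / INR d * INR j - 1) * INR d) with (INR s * INR j - INR d)
      by (field; lra). lra.
  - apply (Rmult_le_reg_r (INR d)); auto.
    replace (INR s / INR d * INR j * INR d) with (INR s * INR j) by (field; lra).
    rewrite <- !mult_INR. apply le_INR. rewrite Nat.mul_comm. apply Nat.Div0.mul_div_le.
Qed.

Lemma slope_between a b : 0 <= a -> a < b -> b < 1 ->
  exists s d, (0 < d)%nat /\ (s <= d)%nat /\
    a < INR s / INR d /\ INR s / INR d + / INR d < b.
Proof.
  intros Ha Hab Hb1.
  destruct (INR_unbounded (2 / (b - a) + 1)) as [d Hd].
  assert (H2 : 0 < 2 / (b - a)) by (apply Rdiv_lt_0_compat; lra).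
  assert (Hdp : 0 < INR d) by lra.
  assert (Hdba : 2 < INR d * (b - a)).
  { apply (Rmult_lt_compat_r (b - a)) in Hd; [|lra].
    replace ((2 / (b - a) + 1) * (b - a)) with (2 + (b - a)) in Hd by (field; lra). lra. }
  set (z := up (INR d * a)). assert (Hz := archimed (INR d * a)). fold z in Hz.
  assert (Hz0 : (0 <= z)%Z) by (apply le_IZR; destruct Hz; nra).
  exists (Z.to_nat z), d.
  assert (Hs : INR (Z.to_nat z) = IZR z) by (rewrite INR_IZR_INZ, Z2Nat.id; auto).
  assert (Hd0 : (0 < d)%nat) by (apply INR_lt; simpl; lra).
  rewrite Hs. repeat split; auto.
  - apply Nat.lt_le_incl, INR_lt. rewrite Hs. destruct Hz. nra.
  - apply (Rmult_lt_reg_r (INR d)); auto.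
    replace (IZR z / INR d * INR d) with (IZR z) by (field; lra). destruct Hz; lra.
  - apply (Rmult_lt_reg_r (INR d)); auto.
    replace ((IZR z / INR d + / INR d) * INR d) with (IZR z + 1) by (field; lra).
    destruct Hz; lra.
Qed.

(** If [sum 2^(a j) eta_j] diverges and [k_j > c j - 1] with [c > a], then
    [j + 1 <= eta_j 2^(k_j)] for infinitely many [j]: otherwise the terms
    would be dominated by [2 (j+1) 2^((a-c) j)]. *)
Lemma eta_large_infinitely_often nu a c (kk : nat -> nat) :
  is_prob_on_pairs nu -> diverges (fun j => Rpower 2 (a * INR j) * eta nu j) -> a < c ->
  (forall j, c * INR j - 1 < INR (kk j)) ->
  forall N, exists j, (N <= j)%nat /\ INR (S j) <= eta nu j * 2 ^ (kk j).
Proof.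
  intros Hnu Hdiv Hac Hkk. apply NNPP. intro Hn. apply not_all_ex_not in Hn.
  destruct Hn as [N HN].
  apply (not_diverges_dominated (fun j => Rpower 2 (a * INR j) * eta nu j)
           2 (Rpower 2 (a - c)) N); auto.
  - intro j. apply Rmult_le_pos; [left; apply Rpower_pos | apply eta_bounds; auto].
  - lra.
  - apply Rpower2_lt1; lra.
  - intros j Hj.
    assert (Hlt : eta nu j * Rpower 2 (INR (kk j)) < INR (S j)).
    { rewrite <- pow2_Rpower. apply Rnot_le_lt. intro Hle. apply HN. eauto. }
    assert (Hq : Rpower 2 (a * INR j) <= 2 * Rpower 2 (a - c) ^ j * Rpower 2 (INR (kk j))).
    { rewrite <- Rpower_pow_mult.
      replace (2 * Rpower 2 ((a - c) * INR j) * Rpower 2 (INR (kk j)))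
        with (Rpower 2 (1 + (a - c) * INR j + INR (kk j)))
        by (rewrite !Rpower_plus, Rpower_1; lra).
      apply Rle_Rpower; [lra|]. specialize (Hkk j). nra. }
    assert (Hev := eta_bounds nu j Hnu). rewrite <- S_INR.
    assert (Hpa := Rpower_pos 2 (a * INR j)).
    assert (0 <= 2 * Rpower 2 (a - c) ^ j)
      by (apply Rmult_le_pos, pow_le; [lra | left; apply Rpower_pos]).
    apply Rle_trans with (2 * Rpower 2 (a - c) ^ j * (eta nu j * Rpower 2 (INR (kk j)))).
    + rewrite (Rmult_comm (eta nu j)), <- Rmult_assoc. apply Rmult_le_compat_r; lra.
    + replace (2 * (INR (S j) * Rpower 2 (a - c) ^ j))
        with (2 * Rpower 2 (a - c) ^ j * INR (S j)) by ring.
      apply Rmult_le_compat_l; lra.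
Qed.

(** Level [j] is good for the slope [s/d] and the exponent [alpha]: the
    cylinders of generation [j - k_j] are small enough for [L_alpha], and
    [eta_j] is large enough for bad cylinders to be unlikely. *)
Definition good_level nu hb alpha (s d j : nat) : Prop :=
  hb * INR (S j) / alpha <= INR (j - slope_level s d j) /\
  INR (S j) <= eta nu j * 2 ^ (slope_level s d j).

Definition admissible nu hb alpha (s d : nat) : Prop :=
  (0 < d)%nat /\ (s <= d)%nat /\
  forall N, exists j, (N <= j)%nat /\ good_level nu hb alpha s d j.

(** For [h < alpha] with divergent series, some slope has infinitely many
    good levels: take [1 - hb/h < s/d < s/d + 1/d < 1 - hb/alpha]. *)
Lemma admissible_exists nu hb alpha h :
  is_prob_on_pairs nu -> 0 < hb -> htilde_set nu hb h -> h < alpha ->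
  exists s d, admissible nu hb alpha s d.
Proof.
  intros Hnu Hhb Hset Hha.
  assert (Hhbh := htilde_lower nu hb h Hnu Hhb Hset).
  destruct Hset as [Hh Hdiv].
  set (a := 1 - hb / h) in *. set (b := 1 - hb / alpha).
  assert (Ha0 : 0 <= a).
  { unfold a. enough (hb / h <= 1) by lra.
    apply (Rmult_le_reg_r h); auto; unfold Rdiv; rewrite Rmult_assoc, Rinv_l; lra. }
  assert (Hab : a < b).
  { unfold a, b. enough (hb / alpha < hb / h) by lra.
    apply Rmult_lt_compat_l; auto; apply Rinv_lt_contravar; nra. }
  assert (Hb1 : b < 1) by (unfold b; enough (0 < hb / alpha) by lra; apply Rdiv_lt_0_compat; lra).
  destruct (slope_between a b Ha0 Hab Hb1) as [s [d [Hd [Hs [Hac Hcb]]]]].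
  exists s, d. repeat split; auto.
  assert (Hlev := slope_level_bounds s d).
  assert (Heta := eta_large_infinitely_often nu a (INR s / INR d) (slope_level s d)
                    Hnu Hdiv Hac (fun j => proj1 (Hlev j Hd))).
  intro N. destruct (Heta (Nat.max N d)) as [j [Hj Hej]].
  exists j. split; [lia|]. split; auto.
  rewrite minus_INR by (apply slope_level_le; auto).
  replace (hb * INR (S j) / alpha) with ((1 - b) * INR (S j)) by (unfold b; field; lra).
  assert (HdR : 0 < INR d) by (apply lt_0_INR; auto).
  assert (HjR : INR d <= INR j) by (apply le_INR; lia).
  assert (Hinvd : / INR d * INR j >= 1).
  { apply Rle_ge. apply (Rmult_le_reg_l (INR d)); auto.
    rewrite <- Rmult_assoc, Rinv_r by lra. lra. }
  destruct (Hlev j Hd) as [_ Hup]. rewrite S_INR.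
  assert (0 <= INR j) by apply pos_INR. nra.
Qed.

Definition approx_exponent (xt : R) (n : nat) : R := xt + / INR (S n).

Lemma approx_exponent_gt xt n : xt < approx_exponent xt n.
Proof.
  unfold approx_exponent.
  assert (0 < / INR (S n)) by (apply Rinv_0_lt_compat, lt_0_INR; lia). lra.
Qed.

Lemma approx_exponent_between nu hb xt alpha :
  is_glb (htilde_set nu hb) xt -> xt < alpha ->
  exists n h, htilde_set nu hb h /\ h < approx_exponent xt n /\ approx_exponent xt n < alpha.
Proof.
  intros [_ Hglb] Hxa.
  destruct (INR_unbounded (/ (alpha - xt))) as [n Hn].
  exists n.
  assert (Hlt : approx_exponent xt n < alpha).
  { unfold approx_exponent.
    assert (INR n < INR (S n)) by (apply lt_INR; lia).
    enough (/ INR (S n) < alpha - xt) by lra.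
    rewrite <- (Rinv_inv (alpha - xt)). apply Rinv_lt_contravar; [|lra].
    apply Rmult_lt_0_compat; [apply Rinv_0_lt_compat; lra | apply lt_0_INR; lia]. }
  apply NNPP; intro Hno. assert (Hgt := approx_exponent_gt xt n).
  enough (approx_exponent xt n <= xt) by lra.
  apply Hglb. intros h Hh. apply Rnot_lt_le. intro Hhn. apply Hno; eauto.
Qed.

Definition exceptional {Omega : Type} (X : word -> Omega -> bool) nu hb xt (w : Omega)
  : Prop :=
  exists n s d N, admissible nu hb (approx_exponent xt n) s d /\
    forall j, (N <= j)%nat -> good_level nu hb (approx_exponent xt n) s d j ->
      has_bad_cylinder X j (slope_level s d j) w.

(** Countable union over [(n, s, d, N)] of the null events of
    [bad_at_good_levels_negligible] (empty when the slope is not admissible). *)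
Lemma exceptional_negligible {Omega : Type} F P nu (X : word -> Omega -> bool) hb xt :
  is_probability F P -> is_prob_on_pairs nu -> (forall u b, F (fun w => X u w = b)) ->
  branching_property P nu X -> negligible F P (exceptional X nu hb xt).
Proof.
  intros HP Hnu HX HB. unfold exceptional.
  apply (negligible_exn F P HP); intro n.
  apply (negligible_exn F P HP); intro s.
  apply (negligible_exn F P HP); intro d.
  apply (negligible_exn F P HP); intro N.
  set (al := approx_exponent xt n).
  destruct (classic (admissible nu hb al s d)) as [Hadm|Hno].
  - rewrite (set_ext _ (fun w => forall j, (N <= j)%nat -> good_level nu hb al s d j ->
                                   has_bad_cylinder X j (slope_level s d j) w))
      by (intro w; tauto).
    destruct Hadm as [Hd [Hs Hinf]].
    apply (bad_at_good_levels_negligible F P nu X HP Hnu HX HB); auto.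
    + intro j; apply slope_level_le; auto.
    + intros j [_ Hg]. apply bad_cylinder_bound_half; auto.
      * apply eta_bounds; auto.
      * apply slope_level_le; auto.
  - split.
    + apply (sa_ext _ (sa_empty _ (pr_sigma _ _ HP))); intro w; tauto.
    + rewrite (P_ext P _ (fun _ => False)) by (intro w; tauto). apply (P_empty F P HP).
Qed.

Lemma dyadic_radius_le hb alpha alpha' (n n' m : nat) :
  0 < hb -> 0 < alpha' -> alpha' <= alpha -> (n <= n')%nat ->
  hb * INR n' / alpha' <= INR m -> / 2 ^ m <= Rpower 2 (- (hb * INR n / alpha)).
Proof.
  intros Hhb Ha' Haa Hn H. rewrite Rpower_Ropp, pow2_Rpower.
  apply Rinv_le_contravar; [apply Rpower_pos|].
  apply Rle_Rpower; [lra|]. eapply Rle_trans; [|exact H].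
  unfold Rdiv. apply Rmult_le_compat.
  - apply Rmult_le_pos; [lra | apply pos_INR].
  - left; apply Rinv_0_lt_compat; lra.
  - apply Rmult_le_compat_l; [lra | apply le_INR; auto].
  - apply Rinv_le_contravar; lra.
Qed.

Theorem mainTheorem6 (Omega : Type) (F : (Omega -> Prop) -> Prop)
  (P : (Omega -> Prop) -> R) (nu : bool -> nat -> bool * bool -> R)
  (X : word -> Omega -> bool) (hb : R) (t : option R) :
  is_probability F P ->
  is_prob_on_pairs nu ->
  (forall u b, F (fun w => X u w = b)) ->
  branching_property P nu X ->
  0 < hb ->
  is_htilde nu hb t ->
  exists E : Omega -> Prop, F E /\ P E = 1 /\
    forall w, E w ->
      forall alpha : R, above_htilde t alpha ->
        forall x : R, in_L X hb alpha w x.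
Proof.
  intros HP Hnu HX HB Hhb Ht.
  destruct t as [xt|]; simpl in Ht.
  2:{ exists (fun _ => True). split; [apply (sa_full _ (pr_sigma _ _ HP))|].
      split; [apply (pr_full _ _ HP) | intros w _ alpha []]. }
  exists (fun w => ~ exceptional X nu hb xt w).
  destruct (almost_sure_of_negligible F P HP _ (exceptional_negligible F P nu X hb xt HP Hnu HX HB))
    as [HF H1].
  split; [exact HF|]. split; [exact H1|].
  intros w Hw alpha Halpha x. simpl in Halpha.
  destruct (approx_exponent_between nu hb xt alpha Ht Halpha) as [n [h [Hh [Hhn Hna]]]].
  set (al := approx_exponent xt n) in *.
  destruct (admissible_exists nu hb al h Hnu Hhb Hh Hhn) as [s [d Hadm]].
  apply in_L_of_close_active. intro N.
  assert (Hlevel : exists j, ((N <= j)%nat /\ good_level nu hb al s d j) /\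
                             ~ has_bad_cylinder X j (slope_level s d j) w).
  { apply NNPP; intro Hno; apply Hw. exists n, s, d, N. split; auto.
    intros j Hj Hg. apply NNPP; intro Hb. apply Hno; eauto. }
  destruct Hlevel as [j [[HjN [Hrad _]] Hgood]].
  destruct Hadm as [Hd [Hs _]].
  destruct (active_node_near X w j (slope_level s d j) x (slope_level_le s d j Hd Hs) Hgood)
    as [u [Hact [Hlen Hclose]]].
  exists u. split; [auto|]. split; [lia|].
  eapply Rlt_le_trans; [exact Hclose|].
  destruct Hh as [Hh0 _].
  apply (dyadic_radius_le hb alpha al (length u) (S j)); auto; [lra | lra | lia].
Qed.
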